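(* Let $\mathcal{P}=\langle\mathcal{A}\mid\mathcal{R}\rangle$ be a presentation with $\mathcal{A}$ finite (and $\mathcal{R}$ possibly infinite), equipped with an index $\|\cdot\|:\mathcal{R}\to\mathbb{N}$, and let $(\alpha,\pi)$ be an area-penetration pair for $(\mathcal{P},\|\cdot\|)$. Let $\mathcal{S}$ be a set of words over $\mathcal{A}^{\pm1}$ whose normal closure in the free group $F(\mathcal{A})$ equals that of $\mathcal{R}$, let $\mathcal{Q}=\langle\mathcal{A}\mid\mathcal{S}\rangle$, and let $\mathrm{RArea}$ be the relational area function of $(\mathcal{P},\|\cdot\|)$ over $\mathcal{Q}$. Then for all $n$, $\delta_{\mathcal{Q}}(n)\le \alpha(n)\,\mathrm{RArea}(\pi(n))$.
   Context: An index on $\mathcal{R}$ is any function $\|\cdot\|:\mathcal{R}\to\mathbb{N}$, extended by $\|r^{-1}\|=\|r\|$. For a word $w$ over $\mathcal{A}^{\pm1}$ representing the identity, a null-$\mathcal{P}$-expression is a sequence $(x_i,r_i)_{i=1}^m$, $x_i$ words, $r_i\in\mathcal{R}^{\pm1}$, with $w$ freely equal to $\prod_{i=1}^m x_ir_ix_i^{-1}$; its area is $m$. A pair $(\alpha,\pi)$ of functions $\mathbb{N}\to\mathbb{N}$ is an area-penetration pair for $(\mathcal{P},\|\cdot\|)$ if every null-homotopic word $w$ with $|w|\le n$ admits a null-$\mathcal{P}$-expression $(x_i,r_i)_{i=1}^m$ with $m\le\alpha(n)$ and $\|r_i\|\le\pi(n)$ for all $i$. $\mathrm{Area}_{\mathcal{Q}}(w)$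 is the minimal area of a null-$\mathcal{Q}$-expression for $w$, and the Dehn function is $\delta_{\mathcal{Q}}(n)=\max\{\mathrm{Area}_{\mathcal{Q}}(w): w \text{ null-homotopic}, |w|\le n\}$. The relational area function of $(\mathcal{P},\|\cdot\|)$ over $\mathcal{Q}$ is $\mathrm{RArea}(n)=\max\{\mathrm{Area}_{\mathcal{Q}}(r): r\in\mathcal{R},\ \|r\|\le n\}\in\mathbb{N}\cup\{\infty\}$. *)

From mathcomp Require Import all_boot.
From mathcomp Require Import boolp.

Set Implicit Arguments.
Unset Strict Implicit.
Unset Printing Implicit Defensive.

Section Words.
Variable A : finType.

(* letters of A^{+-1}: (a, true) = a, (a, false) = a^{-1} *)
Definition letter := (A * bool)%type.
Definition word := seq letter.

Definition inv_letter (l : letter) : letter := (l.1, ~~ l.2).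
Definition inv_word (w : word) : word := rev (map inv_letter w).

Definition reduce (w : word) : word :=
  foldr (fun l acc => match acc with
                      | l' :: acc' => if l' == inv_letter l then acc' else l :: acc
                      | [::] => [:: l]
                      end) [::] w.

Definition freely_equal (u v : word) : Prop := reduce u = reduce v.

(* a null-expression is a sequence of triples (x_i, r_i, s_i) with r_i in R;
   the relator used is r_i if s_i = true and r_i^{-1} otherwise *)
Definition expr_word (e : seq (word * word * bool)) : word :=
  flatten (map (fun t => t.1.1 ++ (if t.2 then t.1.2 else inv_word t.1.2)
                                ++ inv_word t.1.1) e).

Definition NullExpr (R : word -> Prop) (w : word) (e : seq (word * word * bool)) : Prop :=
  (forall t, t \in e -> R t.1.2) /\ freely_equal w (expr_word e).

(* w is null-homotopic in <A | R>, i.e. w lies in the normal closure of R in F(A) *)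
Definition NullHom (R : word -> Prop) (w : word) : Prop :=
  exists e, NullExpr R w e.

Definition area_at (R : word -> Prop) (w : word) : pred nat :=
  fun m => `[< exists e, size e = m /\ NullExpr R w e >].

Lemma area_at_ex (R : word -> Prop) (w : word) :
  NullHom R w -> exists m, area_at R w m.
Proof.
by move=> [e he]; exists (size e); apply/asboolP; exists e.
Qed.

(* Area_R(w): minimal area of a null-R-expression (0 if w is not null-homotopic) *)
Definition Area (R : word -> Prop) (w : word) : nat :=
  match pselect (NullHom R w) with
  | left h => ex_minn (area_at_ex h)
  | right _ => 0
  end.

Definition Dehn (R : word -> Prop) (n : nat) : nat :=
  \max_(k < n.+1) \max_(t : k.-tuple letter)
     (if `[< NullHom R (tval t) >] then Area R (tval t) else 0).

Definition AreaPenetrationPair (R : word -> Prop) (idx : word -> nat)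
  (alpha pi : nat -> nat) : Prop :=
  forall n w, NullHom R w -> size w <= n ->
    exists e, NullExpr R w e /\ size e <= alpha n /\
              (forall t, t \in e -> idx t.1.2 <= pi n).

End Words.

(* extended naturals N u {oo}: None = oo *)
Definition enat := option nat.
Definition enat_le (k : nat) (x : enat) : Prop :=
  match x with Some m => k <= m | None => True end.
(* a * x, with the convention 0 * oo = 0 *)
Definition enat_mul (a : nat) (x : enat) : enat :=
  match x with Some m => Some (a * m) | None => if a == 0 then Some 0 else None end.

Definition RArea_bounded (A : finType) (R : word A -> Prop) (idx : word A -> nat)
  (S : word A -> Prop) (n : nat) : pred nat :=
  fun M => `[< forall r, R r -> idx r <= n -> Area S r <= M >].

(* relational area function: max { Area_S(r) : r in R, ||r|| <= n } in N u {oo} *)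
Definition RArea (A : finType) (R : word A -> Prop) (idx : word A -> nat)
  (S : word A -> Prop) (n : nat) : enat :=
  match pselect (exists M, RArea_bounded R idx S n M) with
  | left h => Some (ex_minn h)
  | right _ => None
  end.

(* Substitute, in a short null-P-expression for w, an optimal null-Q-expression
   (suitably conjugated and inverted) for each relator r_i of P.  The area-penetration
   pair gives at most alpha(n) relators, each with ||r_i|| <= pi(n) and hence
   Q-area at most RArea(pi(n)); concatenating yields a null-Q-expression for w of
   area at most alpha(n) RArea(pi(n)). *)
From mathcomp Require Import all_boot.
From mathcomp Require Import boolp.

Set Implicit Arguments.
Unset Strict Implicit.
Unset Printing Implicit Defensive.

Section FreeReduction.
Variable A : finType.
Implicit Types (l : letter A) (u v w x y : word A).

Definition reduce_step l y : word A :=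
  if y is l' :: y' then (if l' == inv_letter l then y' else l :: y) else [:: l].

Fixpoint reduced w : bool :=
  if w is l :: ((l' :: _) as w') then (l' != inv_letter l) && reduced w' else true.

Lemma reduceE w : reduce w = foldr reduce_step [::] w.
Proof. by []. Qed.

Lemma inv_letterK : involutive (@inv_letter A).
Proof. by case=> a b; rewrite /inv_letter /= negbK. Qed.

Lemma reduced_behead l y : reduced (l :: y) -> reduced y.
Proof. by case: y => //= ? ? /andP[]. Qed.

Lemma reduced_step l y : reduced y -> reduced (reduce_step l y).
Proof.
case: y => [//|l' y] red_y /=; case: eqP => [_|ne]; first exact: reduced_behead red_y.
by apply/andP; split; [apply/eqP | exact: red_y].
Qed.

Lemma reduce_stepK l y :
  reduced y -> reduce_step l (reduce_step (inv_letter l) y) = y.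
Proof.
case: y => [|l' y] /=; first by rewrite eqxx.
rewrite inv_letterK; case: eqP => [->|_] red_y /=; last by rewrite eqxx.
by case: y red_y => [//|l'' y] /= /andP[/negbTE ->].
Qed.

Lemma reduced_foldr v u : reduced v -> reduced (foldr reduce_step v u).
Proof. by move=> red_v; elim: u => //= l u; apply: reduced_step. Qed.

Lemma foldr_reduce_step v l y : reduced v -> reduced y ->
  foldr reduce_step v (reduce_step l y) = reduce_step l (foldr reduce_step v y).
Proof.
move=> red_v; case: y => [//|l' y] red_y /=; case: eqP => [->|_] //.
by rewrite reduce_stepK // reduced_foldr // (reduced_behead red_y).
Qed.

Lemma reduced_reduce u : reduced (reduce u).
Proof. exact: reduced_foldr. Qed.

Lemma foldr_reduce v u : reduced v ->
  foldr reduce_step v u = foldr reduce_step v (reduce u).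
Proof.
move=> red_v; elim: u => //= l u ->.
by rewrite -foldr_reduce_step // reduced_reduce.
Qed.

Lemma reduce_cat u v : reduce (u ++ v) = foldr reduce_step (reduce v) (reduce u).
Proof. by rewrite reduceE foldr_cat -reduceE foldr_reduce // reduced_reduce. Qed.

Lemma freely_equal_trans v u w :
  freely_equal u v -> freely_equal v w -> freely_equal u w.
Proof. by rewrite /freely_equal => ->. Qed.

Lemma freely_equal_cat u u' v v' :
  freely_equal u u' -> freely_equal v v' -> freely_equal (u ++ v) (u' ++ v').
Proof. by rewrite /freely_equal !reduce_cat => -> ->. Qed.

Lemma freely_equal_mid u v m m' :
  freely_equal m m' -> freely_equal (u ++ m ++ v) (u ++ m' ++ v).
Proof. by move=> eq_m; do 2![apply: freely_equal_cat => //]. Qed.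

Lemma inv_word_cat u v : inv_word (u ++ v) = inv_word v ++ inv_word u.
Proof. by rewrite /inv_word map_cat rev_cat. Qed.

Lemma inv_wordK : involutive (@inv_word A).
Proof.
move=> u; rewrite /inv_word map_rev revK -map_comp.
by rewrite (eq_map (g := id)) ?map_id // => l /=; rewrite inv_letterK.
Qed.

Lemma freely_equal_mulV u : freely_equal (u ++ inv_word u) [::].
Proof.
elim: u => [//|l u IHu].
rewrite -cat1s inv_word_cat.
have := freely_equal_mid [:: l] [:: inv_letter l] IHu.
by rewrite /freely_equal /= -catA => ->; rewrite /= eqxx.
Qed.

Lemma freely_equal_Vmul u : freely_equal (inv_word u ++ u) [::].
Proof. by have := freely_equal_mulV (inv_word u); rewrite inv_wordK. Qed.

Lemma freely_equal_inv u v :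
  freely_equal u v -> freely_equal (inv_word u) (inv_word v).
Proof.
move=> eq_uv.
have := freely_equal_mid (inv_word u) [::] (freely_equal_mulV v).
rewrite !cats0 /freely_equal => <-.
have := freely_equal_mid (inv_word u) (inv_word v) (esym eq_uv).
rewrite /freely_equal => ->.
have := freely_equal_mid [::] (inv_word v) (freely_equal_Vmul u).
by rewrite /= -catA; apply.
Qed.

End FreeReduction.

Section NullExpressions.
Variable A : finType.
Implicit Types (u w x r : word A) (e f g : seq (word A * word A * bool))
  (S : word A -> Prop).

Definition conj_expr x f : seq (word A * word A * bool) :=
  map (fun t => (x ++ t.1.1, t.1.2, t.2)) f.

Definition inv_expr f : seq (word A * word A * bool) :=
  rev (map (fun t => (t.1.1, t.1.2, ~~ t.2)) f).

Lemma expr_word_cat f g : expr_word (f ++ g) = expr_word f ++ expr_word g.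
Proof. by rewrite /expr_word map_cat flatten_cat. Qed.

Lemma expr_word_cons t f : expr_word (t :: f) =
  (t.1.1 ++ (if t.2 then t.1.2 else inv_word t.1.2) ++ inv_word t.1.1) ++ expr_word f.
Proof. by []. Qed.

Lemma expr_word_conj x f :
  freely_equal (x ++ expr_word f ++ inv_word x) (expr_word (conj_expr x f)).
Proof.
elim: f => [|t f IHf]; first exact: freely_equal_mulV.
rewrite expr_word_cons /conj_expr map_cons -/(conj_expr x f) expr_word_cons /=.
set B := t.1.1 ++ _ ++ _.
have -> : (x ++ t.1.1) ++ (if t.2 then t.1.2 else inv_word t.1.2)
            ++ inv_word (x ++ t.1.1) = x ++ B ++ inv_word x.
  by rewrite inv_word_cat /B -!catA.
apply: (@freely_equal_trans _ ((x ++ B ++ inv_word x) ++ (x ++ expr_word f ++ inv_word x)));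
  last exact: freely_equal_cat.
have := freely_equal_mid (x ++ B) (expr_word f ++ inv_word x) (freely_equal_Vmul x).
by rewrite -!catA /freely_equal => ->.
Qed.

Lemma expr_word_inv f : inv_word (expr_word f) = expr_word (inv_expr f).
Proof.
elim: f => [//|t f IHf].
rewrite expr_word_cons inv_word_cat IHf /inv_expr map_cons rev_cons -cats1.
rewrite expr_word_cat; congr (_ ++ _).
rewrite /expr_word /= cats0 !inv_word_cat inv_wordK catA.
by case: (t.2); rewrite //= inv_wordK.
Qed.

Lemma NullExpr_freely_equal S u w e :
  freely_equal u w -> NullExpr S w e -> NullExpr S u e.
Proof. by move=> eq_uw [Se eq_we]; split; last exact: freely_equal_trans eq_we. Qed.

Lemma NullExpr_cat S u w f g :
  NullExpr S u f -> NullExpr S w g -> NullExpr S (u ++ w) (f ++ g).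
Proof.
move=> [Sf eq_uf] [Sg eq_wg]; split.
  by move=> t; rewrite mem_cat => /orP[/Sf | /Sg].
by rewrite expr_word_cat; apply: freely_equal_cat.
Qed.

Lemma NullExpr_inv S r f : NullExpr S r f -> NullExpr S (inv_word r) (inv_expr f).
Proof.
move=> [Sf eq_rf]; split; last by rewrite -expr_word_inv; apply: freely_equal_inv.
by move=> t; rewrite mem_rev => /mapP[t' /Sf S_t' ->].
Qed.

Lemma NullExpr_conj S x r f :
  NullExpr S r f -> NullExpr S (x ++ r ++ inv_word x) (conj_expr x f).
Proof.
move=> [Sf eq_rf]; split; first by move=> t /mapP[t' /Sf S_t' ->].
apply: freely_equal_trans (expr_word_conj x f).
exact: freely_equal_mid.
Qed.

End NullExpressions.

Section AreaFacts.
Variable A : finType.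
Variable S : word A -> Prop.
Implicit Types (w : word A) (e : seq (word A * word A * bool)).

Lemma NullHom_relator r : S r -> NullHom S r.
Proof.
move=> Sr; exists [:: ([::], r, true)]; split; first by move=> t /[!inE] /eqP ->.
by rewrite /freely_equal /expr_word /= !cats0.
Qed.

Lemma Area_attained w : NullHom S w -> exists e, NullExpr S w e /\ size e = Area S w.
Proof.
move=> hS; rewrite /Area; case: pselect => [h|//].
by case: ex_minnP => m /asboolP[e [<- he]] _; exists e.
Qed.

Lemma Area_le_size w e : NullExpr S w e -> Area S w <= size e.
Proof.
move=> he; rewrite /Area; case: pselect => [h|]; last by case; exists e.
by case: ex_minnP => m _; apply; apply/asboolP; exists e.
Qed.

Lemma Dehn_le n K :
  (forall w, NullHom S w -> size w <= n -> Area S w <= K) -> Dehn S n <= K.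
Proof.
move=> area_le; apply/bigmax_leqP => k _; apply/bigmax_leqP => t _.
case: asboolP => // hS; apply: area_le hS _.
by rewrite size_tuple -ltnS ltn_ord.
Qed.

End AreaFacts.

Section Substitution.
Variable A : finType.
Variables (R S : word A -> Prop).
Hypothesis R_NullHom_S : forall r, R r -> NullHom S r.
Implicit Types (w : word A) (e : seq (word A * word A * bool)).

Lemma NullExpr_conj_relator (t : word A * word A * bool) : R t.1.2 ->
  exists g, NullExpr S (t.1.1 ++ (if t.2 then t.1.2 else inv_word t.1.2)
                               ++ inv_word t.1.1) g
            /\ size g = Area S t.1.2.
Proof.
move=> /R_NullHom_S /Area_attained[f [hf <-]].
case: (t.2); [exists (conj_expr t.1.1 f) | exists (conj_expr t.1.1 (inv_expr f))].
  by rewrite size_map; split => //; apply: NullExpr_conj.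
by rewrite size_map size_rev size_map; split => //; apply/NullExpr_conj/NullExpr_inv.
Qed.

Lemma NullExpr_substitute e M :
  (forall t, t \in e -> R t.1.2 /\ Area S t.1.2 <= M) ->
  exists g, NullExpr S (expr_word e) g /\ size g <= size e * M.
Proof.
elim: e => [|t e IHe] bound_e; first by exists [::].
have [Rt At] := bound_e t (mem_head _ _).
have [g1 [hg1 size_g1]] := NullExpr_conj_relator Rt.
have [|g2 [hg2 size_g2]] := IHe.
  by move=> u ue; apply: bound_e; rewrite inE ue orbT.
exists (g1 ++ g2); split; first by rewrite expr_word_cons; apply: NullExpr_cat.
by rewrite size_cat mulSn size_g1 leq_add.
Qed.

Lemma Area_le_NullExpr w e M : NullExpr R w e ->
  (forall t, t \in e -> Area S t.1.2 <= M) -> Area S w <= size e * M.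
Proof.
move=> [Re eq_we] bound_e.
have [g [hg size_g]] := @NullExpr_substitute e M (fun t te => conj (Re t te) (bound_e t te)).
exact: leq_trans (Area_le_size (NullExpr_freely_equal eq_we hg)) size_g.
Qed.

End Substitution.

Lemma RArea_Some (A : finType) (R S : word A -> Prop) (idx : word A -> nat) n M :
  RArea R idx S n = Some M -> forall r, R r -> idx r <= n -> Area S r <= M.
Proof.
rewrite /RArea; case: pselect => [h [<-]|//].
by case: ex_minnP => m /asboolP.
Qed.

Section DehnBound.
Variable A : finType.
Variables (R S : word A -> Prop) (idx : word A -> nat) (alpha pi : nat -> nat).
Hypothesis area_penetration : AreaPenetrationPair R idx alpha pi.
Hypothesis same_normal_closure : forall w, NullHom R w <-> NullHom S w.

Let R_NullHom_S r : R r -> NullHom S r.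
Proof. by move=> /NullHom_relator /same_normal_closure. Qed.

Lemma Dehn_le_penetration n M :
  (forall r, R r -> idx r <= pi n -> Area S r <= M) -> Dehn S n <= alpha n * M.
Proof.
move=> bound_R; apply: Dehn_le => w /same_normal_closure hR size_w.
have [e [he [size_e idx_e]]] := area_penetration hR size_w.
apply: leq_trans (Area_le_NullExpr R_NullHom_S he _) _.
  by move=> t te; apply: bound_R (idx_e t te); apply: he.1.
by rewrite leq_mul2r size_e orbT.
Qed.

Lemma Dehn_penetration0 n : alpha n = 0 -> Dehn S n = 0.
Proof.
move=> alpha0; apply/eqP; rewrite -leqn0 -(muln0 0).
apply: Dehn_le => w /same_normal_closure hR size_w.
have [e [he [size_e _]]] := area_penetration hR size_w.
move: size_e; rewrite alpha0 leqn0 => /nilP e0; rewrite e0 in he.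
exact: (Area_le_NullExpr R_NullHom_S he (M := 0)).
Qed.

End DehnBound.

Theorem proposition2p8 (A : finType) (R : word A -> Prop) (idx : word A -> nat)
  (alpha pi : nat -> nat) (S : word A -> Prop) :
  AreaPenetrationPair R idx alpha pi ->
  (forall w : word A, NullHom R w <-> NullHom S w) ->
  forall n : nat, enat_le (Dehn S n) (enat_mul (alpha n) (RArea R idx S (pi n))).
Proof.
move=> area_penetration same_closure n.
case RArea_n: (RArea R idx S (pi n)) => [M|] /=.
  exact/(Dehn_le_penetration area_penetration same_closure)/RArea_Some/RArea_n.
by case: eqP => // /(Dehn_penetration0 area_penetration same_closure) ->.
Qed.
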